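(* Let $\mathcal{I}$ be finite with $n=|\mathcal{I}|$, and let $X$ be a random variable uniformly distributed on $\mathcal{I}$. Then the answer-dependent pricing function $p(\mathbf{Q},E)=H(X)-H(X\mid\mathbf{Q}(X)=E)$, where $H$ is Shannon entropy (equivalently $p(\mathbf{Q},E)=\log n-\log|\mathcal{S}_{\mathbf{Q}}(E)|$), has no information arbitrage.
   Context: $\mathcal{I}$ is a set of database instances; queries are deterministic functions on $\mathcal{I}$; a query bundle is a finite tuple of queries from a language $\mathcal{L}$, evaluated componentwise; $B(\mathcal{L})$ is the set of bundles; $E$ ranges over $\{\mathbf{Q}(D):D\in\mathcal{I}\}$. $\mathcal{S}_{\mathbf{Q}}(E)=\{D'\in\mathcal{I}:\mathbf{Q}(D')=E\}$. $D\vdash\mathbf{Q}_2\twoheadrightarrow\mathbf{Q}_1$ means every $D'\in\mathcal{I}$ with $\mathbf{Q}_2(D')=\mathbf{Q}_2(D)$ satisfies $\mathbf{Q}_1(D')=\mathbf{Q}_1(D)$. $p$ has no information arbitrage if for every $D\in\mathcal{I}$ and $\mathbf{Q}_1,\mathbf{Q}_2\in B(\mathcal{L})$, $D\vdash\mathbf{Q}_2\twoheadrightarrow\mathbf{Q}_1$ implies $p(\mathbf{Q}_2,\mathbf{Q}_2(D))\ge p(\mathbf{Q}_1,\mathbf{Q}_1(D))$. *)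

From HB Require Import structures.
From mathcomp Require Import all_boot all_order all_algebra.
From mathcomp Require Import reals exp.
Set Implicit Arguments. Unset Strict Implicit. Unset Printing Implicit Defensive.
Import Order.TTheory GRing.Theory Num.Theory.
Local Open Scope ring_scope.

Section Pricing.
Variables (R : realType) (I : finType) (A : eqType).

(* A query is a deterministic function on database instances I with answers in A;
   a query bundle is a finite tuple (list) of queries, evaluated componentwise. *)
Definition bundle := seq (I -> A).

Definition eval_bundle (Q : bundle) (D : I) : seq A := map (fun q => q D) Q.

Definition in_B (L : pred (I -> A)) (Q : bundle) : bool := all L Q.

Definition consistent_set (Q : bundle) (E : seq A) : {set I} :=
  [set D' | eval_bundle Q D' == E].

Definition determines (D : I) (Q2 Q1 : bundle) : Prop :=
  forall D' : I, eval_bundle Q2 D' = eval_bundle Q2 D ->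
                 eval_bundle Q1 D' = eval_bundle Q1 D.

Definition no_info_arbitrage (L : pred (I -> A)) (p : bundle -> seq A -> R) : Prop :=
  forall (D : I) (Q1 Q2 : bundle), in_B L Q1 -> in_B L Q2 ->
    determines D Q2 Q1 -> p Q1 (eval_bundle Q1 D) <= p Q2 (eval_bundle Q2 D).

Definition entropy (P : I -> R) : R :=
  - \sum_(x : I) (if P x == 0 then 0 else P x * ln (P x)).

Definition unif_pmf : I -> R := fun _ => (#|I|%:R)^-1.

(* pmf of X conditioned on the event Q(X) = E *)
Definition cond_pmf (Q : bundle) (E : seq A) : I -> R :=
  fun x => \sum_(y : I | eval_bundle Q y == E) (if y == x then unif_pmf y else 0)
           / \sum_(y : I | eval_bundle Q y == E) unif_pmf y.

Definition entropy_price (Q : bundle) (E : seq A) : R :=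
  entropy unif_pmf - entropy (cond_pmf Q E).

End Pricing.

(* The uniform distribution conditioned on the event Q(X) = E is uniform on
   S_Q(E), so the price is ln n - ln |S_Q(E)|.  If Q2 determines Q1 at D, every
   instance consistent with Q2's answer is consistent with Q1's, so
   S_Q2(Q2 D) is a subset of S_Q1(Q1 D), and monotonicity of ln concludes. *)
From HB Require Import structures.
From mathcomp Require Import all_boot all_order all_algebra.
From mathcomp Require Import reals exp.
Import Order.TTheory GRing.Theory Num.Theory.
Local Open Scope ring_scope.

Section EntropyPrice.
Variables (R : realType) (I : finType) (A : eqType).

Lemma entropy_uniform_on {S : {set I}} {P : I -> R} :
  (0 < #|S|)%N -> (forall x, P x = if x \in S then (#|S|%:R)^-1 else 0) ->
  entropy P = ln (#|S|%:R).
Proof.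
move=> S_gt0 PE; have S_neq0 : (#|S|%:R : R) != 0 by rewrite pnatr_eq0 -lt0n.
rewrite /entropy (eq_bigr (fun x => if x \in S then
    (#|S|%:R)^-1 * ln ((#|S|%:R : R)^-1) else 0)); last first.
  by move=> x _; rewrite PE; case: (x \in S); rewrite ?eqxx // invr_eq0 (negbTE S_neq0).
rewrite -big_mkcond sumr_const -mulrnAl -(mulr_natr (_^-1)) mulVf // mul1r.
by rewrite lnV ?opprK // posrE ltr0n.
Qed.

Lemma mem_consistent_set (Q : bundle I A) (D : I) :
  D \in consistent_set Q (eval_bundle Q D).
Proof. by rewrite inE. Qed.

Lemma consistent_set_card_gt0 (Q : bundle I A) (D : I) :
  (0 < #|consistent_set Q (eval_bundle Q D)|)%N.
Proof. by apply/card_gt0P; exists D; apply: mem_consistent_set. Qed.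

Lemma determines_consistent_subset (D : I) (Q2 Q1 : bundle I A) :
  determines D Q2 Q1 ->
  consistent_set Q2 (eval_bundle Q2 D) \subset consistent_set Q1 (eval_bundle Q1 D).
Proof. by move=> det; apply/subsetP => x; rewrite !inE => /eqP /det ->. Qed.

Lemma cond_pmf_uniform {Q : bundle I A} {E : seq A} :
  (0 < #|consistent_set Q E|)%N -> forall x,
  cond_pmf R Q E x =
    if x \in consistent_set Q E then (#|consistent_set Q E|%:R)^-1 else 0.
Proof.
set S := consistent_set Q E => S_gt0 x.
have I_gt0 : (0 < #|I|)%N by apply: leq_trans S_gt0 (max_card _).
have I_neq0 : (#|I|%:R : R) != 0 by rewrite pnatr_eq0 -lt0n.
have massS : \sum_(y | eval_bundle Q y == E) unif_pmf R y = #|S|%:R * (#|I|%:R)^-1.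
  rewrite (eq_bigl (fun y => y \in S)); last by move=> y; rewrite inE.
  by rewrite sumr_const mulr_natl.
rewrite /cond_pmf massS; case: ifP => xS.
  rewrite (bigD1 x) /=; last by rewrite inE in xS.
  rewrite eqxx big1 ?addr0; last by move=> y /andP [_ /negbTE ->]; rewrite mul0r.
  by rewrite /unif_pmf invfM invrK mulrCA mulVf // mulr1.
rewrite big1 ?mul0r // => y Qy; case: eqP => [yx|]; last by rewrite mul0r.
by move: xS; rewrite inE -yx Qy.
Qed.

Lemma entropy_price_card (Q : bundle I A) (D : I) :
  entropy_price R Q (eval_bundle Q D) =
  entropy (@unif_pmf R I) - ln (#|consistent_set Q (eval_bundle Q D)|%:R).
Proof.
have S_gt0 := consistent_set_card_gt0 Q D.
have cond_uniform := cond_pmf_uniform S_gt0.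
by rewrite /entropy_price (entropy_uniform_on S_gt0 cond_uniform).
Qed.

End EntropyPrice.

Theorem lemma7 (R : realType) (I : finType) (A : eqType) (L : pred (I -> A)) :
  no_info_arbitrage L (@entropy_price R I A).
Proof.
move=> D Q1 Q2 _ _ det.
rewrite !entropy_price_card lerD2l lerN2.
rewrite ler_ln ?posrE ?ltr0n ?consistent_set_card_gt0 // ler_nat.
exact/subset_leq_card/determines_consistent_subset.
Qed.
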